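(* For every $Q\subset\mathrm{EX}(M)$, the space $Q(M)$ is $T_1$.
   Context: Conventions: $M$ is an $n$-dimensional smooth manifold (Hausdorff, second countable) with maximal $C^\infty$ atlas $\mathcal{A}(M)$; every chart $\alpha$ has open domain $\mathrm{dom}(\alpha)\subset M$ and open range $\mathrm{ran}(\alpha)\subset\mathbb{R}^n$. For $A\subset\mathbb{R}^n$, $\partial A$ is its boundary in $\mathbb{R}^n$; for $A\subset U\subset\mathbb{R}^n$, $\partial_U A$ is the boundary of $A$ relative to $U$. An admissible boundary point of $\alpha$ is a $p\in\partial\,\mathrm{ran}(\alpha)$ such that every sequence $(x_i)\subset\mathrm{dom}(\alpha)$ with $\alpha(x_i)\to p$ has no accumulation point in $M$; $B(\alpha)$ is the set of these. An extension is a pair $(\alpha,U)$, $U\subset\mathbb{R}^n$ open, $\mathrm{ran}(\alpha)\subset U$, $\emptyset\ne\partial_U\mathrm{ran}(\alpha)\subset B(\alpha)$; $\mathrm{EX}(M)$ is the set of extensions. A boundary set is $(\alpha,U,V)$ with $(\alpha,U)\in\mathrm{EX}(M)$, $V\subset B(\alpha)\cap U$ (a boundary point if $V=\{p\}$). $(\alpha,U,V)$ covers $(\beta,X,Y)$ if for every sequence $(y_i)\subset\mathrm{dom}(\beta)$ with $(\beta(y_i))$ having an accumulation point in $Y$ there is a subsequence $(v_i)\subset\mathrm{dom}(\alpha)$ of $(y_i)$ with $(\alpha(v_i))$ having an accumulation point in $V$; they are equivalent, $\equiv$, if each covers the other. Completion: for $Q\subset\mathrm{EX}(M)$ let $P=\{(\alpha,\mathrm{ran}(\alpha)):\alpha\in\mathcal{A}(M)\}$,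 $S_Q=P\cup Q$, $N_{(\alpha,U)}=\mathrm{ran}(\alpha)\cup\partial_U\mathrm{ran}(\alpha)$ with subspace topology of $\mathbb{R}^n$, $N_Q=\bigsqcup_{(\alpha,U)\in S_Q}N_{(\alpha,U)}$ with disjoint-union topology. Identify $x\in N_{(\alpha,U)}$ with $y\in N_{(\beta,X)}$ iff either $x\in\mathrm{ran}(\alpha)$, $y\in\mathrm{ran}(\beta)$, $\beta\circ\alpha^{-1}(x)=y$, or $x\in\partial_U\mathrm{ran}(\alpha)$, $y\in\partial_X\mathrm{ran}(\beta)$, $(\alpha,U,\{x\})\equiv(\beta,X,\{y\})$. $Q(M)$ is the quotient space with the quotient topology and $q:N_Q\to Q(M)$ the quotient map. *)

From HB Require Import structures.
From mathcomp Require Import all_boot all_order all_algebra.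
From mathcomp Require Import all_classical all_reals all_analysis.
Set Implicit Arguments. Unset Strict Implicit. Unset Printing Implicit Defensive.
Import Order.TTheory GRing.Theory Num.Theory.
Import numFieldNormedType.Exports.
Local Open Scope classical_set_scope.
Local Open Scope ring_scope.

Section Manifold.
Variables (R : realType) (n : nat) (M : topologicalType).
Notation Rn := 'rV[R]_n.

Definition sec_countable (T : topologicalType) : Prop :=
  exists B : set (set T), countable B /\ (forall b, B b -> open b) /\
    forall O, open O -> forall x, O x -> exists b, [/\ B b, b x & (b `<=` O)].

Record chart := Chart {
  cdom : set M; cran : set Rn; cphi : M -> Rn; cpsi : Rn -> M }.

Definition is_chart (a : chart) : Prop :=
  open (cdom a) /\ open (cran a) /\ (cphi a @` cdom a = cran a) /\
  (forall x, cdom a x -> cpsi a (cphi a x) = x) /\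
  (forall y, cran a y -> cdom a (cpsi a y) /\ cphi a (cpsi a y) = y) /\
  {within cdom a, continuous cphi a} /\ {within cran a, continuous cpsi a}.

Definition iterD (vs : seq Rn) (f : Rn -> Rn) : Rn -> Rn :=
  foldr (fun v g => fun x => 'D_v g x) f vs.

Definition smooth_on (U : set Rn) (f : Rn -> Rn) : Prop :=
  forall vs : seq Rn,
    (forall x v, U x -> derivable (iterD vs f) x v) /\
    {within U, continuous (iterD vs f)}.

Definition compat (a b : chart) : Prop :=
  smooth_on (cphi a @` (cdom a `&` cdom b)) (cphi b \o cpsi a).

Definition maximal_smooth_atlas (A : set chart) : Prop :=
  [/\ (forall a, A a -> is_chart a),
      (forall x, exists2 a, A a & cdom a x),
      (forall a b, A a -> A b -> compat a b) &
      (forall c, is_chart c -> (forall a, A a -> compat a c /\ compat c a) -> A c)].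

Definition bd (S : set Rn) : set Rn := closure S `\` interior S.
Definition rbd (U S : set Rn) : set Rn :=
  [set p | [/\ U p, closure S p &
     ~ (exists O, [/\ open O, O p & (O `&` U `<=` S)])]].

Definition acc_pt (T : topologicalType) (u : nat -> T) (p : T) : Prop :=
  forall O, nbhs p O -> forall N, exists i, (N <= i)%N /\ O (u i).

Definition B_adm (a : chart) : set Rn :=
  [set p | bd (cran a) p /\
     forall x : nat -> M, (forall i, cdom a (x i)) ->
       (cphi a \o x) @ \oo --> p -> forall z : M, ~ acc_pt x z].

Definition ext := (chart * set Rn)%type.

Definition EX (A : set chart) : set ext :=
  [set e | [/\ A e.1, open e.2, cran e.1 `<=` e.2,
     (rbd e.2 (cran e.1) !=set0) & (rbd e.2 (cran e.1) `<=` B_adm e.1)]].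

Definition covers (a : chart) (U V : set Rn) (b : chart) (X Y : set Rn) : Prop :=
  forall y : nat -> M, (forall i, cdom b (y i)) ->
    (exists2 p, Y p & acc_pt (cphi b \o y) p) ->
    exists s : nat -> nat, (forall i, (s i < s i.+1)%N) /\
      (forall i, cdom a (y (s i))) /\
      exists2 p, V p & acc_pt (cphi a \o (y \o s)) p.

Definition bequiv (a : chart) (U V : set Rn) (b : chart) (X Y : set Rn) : Prop :=
  covers a U V b X Y /\ covers b X Y a U V.

Definition SQ (A : set chart) (Q : set ext) : set ext :=
  [set e | (A e.1 /\ e.2 = cran e.1)] `|` Q.

Definition Nset (e : ext) : set Rn := cran e.1 `|` rbd e.2 (cran e.1).

(** N_Q as a set of pairs (index, point) *)
Definition NQ (A : set chart) (Q : set ext) : set (ext * Rn) :=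
  [set p | SQ A Q p.1 /\ Nset p.1 p.2].

Definition NQ_open (A : set chart) (Q : set ext) (W : set (ext * Rn)) : Prop :=
  W `<=` NQ A Q /\
  forall e, SQ A Q e -> exists O : set Rn,
    open O /\ [set x | Nset e x /\ W (e, x)] = Nset e `&` O.

Definition ident (p q : ext * Rn) : Prop :=
  let: ((a, U), x) := p in let: ((b, X), y) := q in
  [/\ cran a x, cran b y, cdom b (cpsi a x) & cphi b (cpsi a x) = y] \/
  [/\ rbd U (cran a) x, rbd X (cran b) y &
      bequiv a U [set x] b X [set y]].

Definition qclass (A : set chart) (Q : set ext) (p : ext * Rn) : set (ext * Rn) :=
  [set q | NQ A Q q /\ ident p q].

Definition QM (A : set chart) (Q : set ext) : set (set (ext * Rn)) :=
  [set C | exists2 p, NQ A Q p & C = qclass A Q p].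

Definition QM_open (A : set chart) (Q : set ext) (W : set (set (ext * Rn))) : Prop :=
  W `<=` QM A Q /\
  NQ_open A Q [set p | NQ A Q p /\ W (qclass A Q p)].

Definition QM_T1 (A : set chart) (Q : set ext) : Prop :=
  forall C, QM A Q C -> QM_open A Q [set D | QM A Q D /\ D <> C].


End Manifold.
Arguments sec_countable : clear implicits.

(** Every chart determines its own points: two points of one summand
    [N_(alpha,U)] of [N_Q] are identified only if they are equal.  For points
    of [ran alpha] this is injectivity of [alpha o alpha^-1]; for boundary
    points, a sequence of [ran alpha] tending to [x] is covered by a
    subsequence accumulating at [y], so [x = y] because [R^n] is Hausdorff.
    Hence every class meets each summand in at most one point, so its
    preimage is closed in every summand and the complement of the class is
    open in the quotient topology. *)
From HB Require Import structures.
From mathcomp Require Import all_boot all_order all_algebra.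
From mathcomp Require Import all_classical all_reals all_analysis.
Set Implicit Arguments. Unset Strict Implicit. Unset Printing Implicit Defensive.
Local Open Scope classical_set_scope.
Import Order.TTheory GRing.Theory Num.Theory.
Import numFieldNormedType.Exports.

Lemma subsingleton_closed (T : topologicalType) (S : set T) :
  hausdorff_space T -> (forall x y, S x -> S y -> x = y) -> closed S.
Proof.
move=> hT S1; have [->|/eqP/set0P [x Sx]] := pselect (S = set0).
  exact: closed0.
have -> : S = [set x] by apply/seteqP; split=> [y Sy|y ->] //; exact: S1.
exact/accessible_closed_set1/hausdorff_accessible.
Qed.

Lemma closure_cvg_seq (R : realType) (V : pseudoMetricType R) (S : set V) x :
  closure S x -> exists2 z : nat -> V, (forall i, S (z i)) & z @ \oo --> x.
Proof.
move=> Sx.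
have /choice [z zP] : forall i : nat, exists w, S w /\ ball x i.+1%:R^-1 w.
  move=> i; have /Sx [w [Sw xw]] : nbhs x (ball x i.+1%:R^-1).
    by apply: nbhsx_ballx; rewrite invr_gt0 ltr0n.
  by exists w.
exists z => [i|]; first exact: (zP i).1.
apply/cvg_ballP => e e0; have [N _ Ne] := near_infty_natSinv_lt (PosNum e0).
exists N => // i Ni; apply: (le_ball _ (zP i).2).
exact/ltW/Ne.
Qed.

Section AccumulationPoints.
Variable T : topologicalType.
Implicit Types (u : nat -> T) (p q : T).

Lemma cvg_acc_pt u p : u @ \oo --> p -> acc_pt u p.
Proof.
move=> up O pO N; have [N0 _ uO] := up _ pO.
by exists (maxn N N0); split; [exact: leq_maxl | apply: uO; exact: leq_maxr].
Qed.

Lemma cvg_acc_pt_eq u p q :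
  hausdorff_space T -> u @ \oo --> p -> acc_pt u q -> p = q.
Proof.
move=> hT up uq; apply: hT => O B /up [N0 _ uO] /uq /(_ N0) [i [Ni Bi]].
by exists (u i); split => //; exact: uO.
Qed.

Lemma acc_pt_subseq u (s : nat -> nat) q :
  (forall i, (s i < s i.+1)%N) -> acc_pt (u \o s) q -> acc_pt u q.
Proof.
move=> s_incr usq O qO N; have [i [Ni Ousi]] := usq O qO N.
have si_ge : forall j, (j <= s j)%N.
  by elim=> // j IH; exact: leq_ltn_trans IH (s_incr j).
by exists (s i); split => //; exact: leq_trans Ni (si_ge i).
Qed.

End AccumulationPoints.

Section SingleChart.
Variables (R : realType) (n : nat) (M : topologicalType).
Variable a : chart R n M.
Hypothesis a_chart : is_chart a.

Lemma chart_psiK y : cran a y -> cphi a (cpsi a y) = y.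
Proof. by case: a_chart => _ [_ [_ [_ [psiP _]]]] /psiP []. Qed.

Lemma chart_psi_dom y : cran a y -> cdom a (cpsi a y).
Proof. by case: a_chart => _ [_ [_ [_ [psiP _]]]] /psiP []. Qed.

Lemma covers_refl (U V : set 'rV[R]_n) : covers a U V a U V.
Proof. by move=> y ya [p Vp yp]; exists id; split=> //; split=> //; exists p. Qed.

(* Pull back to [M] a sequence of [ran a] converging to [x]: by the covering
   hypothesis some subsequence accumulates at [y]. *)
Lemma covers_point_eq (U : set 'rV[R]_n) x y :
  closure (cran a) x -> covers a U [set y] a U [set x] -> x = y.
Proof.
move=> ax cov; have [z ranz zx] := closure_cvg_seq ax.
have phi_psi_z : cphi a \o (cpsi a \o z) = z.
  by apply/funext => i /=; rewrite chart_psiK.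
have psi_z_dom : forall i, cdom a ((cpsi a \o z) i).
  by move=> i; exact: chart_psi_dom.
have psi_z_acc : exists2 p, [set x] p & acc_pt (cphi a \o (cpsi a \o z)) p.
  by exists x => //; rewrite phi_psi_z; exact: (cvg_acc_pt zx).
have [s [s_incr [_ [p /= -> zsp]]]] := cov _ psi_z_dom psi_z_acc.
apply: (cvg_acc_pt_eq (@norm_hausdorff _ 'rV[R]_n) zx).
by apply: (acc_pt_subseq s_incr); rewrite -phi_psi_z.
Qed.

Lemma ident_refl (U : set 'rV[R]_n) x :
  Nset (a, U) x -> ident ((a, U), x) ((a, U), x).
Proof.
case=> [ax|Ux]; first by left; split=> //; [exact: chart_psi_dom | exact: chart_psiK].
by right; split=> //; split; exact: covers_refl.
Qed.

Lemma ident_same_ext_eq (U : set 'rV[R]_n) x y :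
  ident ((a, U), x) ((a, U), y) -> x = y.
Proof.
case=> [[ax _ _ <-]|[_ [_ ay _] [cov _]]]; first by rewrite chart_psiK.
exact/esym/(covers_point_eq ay cov).
Qed.

End SingleChart.

Lemma qclass_inj (R : realType) (n : nat) (M : topologicalType)
    (A : set (chart R n M)) (Q : set (ext R n M)) (e : ext R n M) x y :
  is_chart e.1 -> SQ A Q e -> Nset e x ->
  qclass A Q (e, x) = qclass A Q (e, y) -> x = y.
Proof.
case: e => a U /= a_chart SQe Nx Cxy.
have : qclass A Q ((a, U), y) ((a, U), x).
  by rewrite -Cxy; split; [split | exact: ident_refl].
by case=> _ /(ident_same_ext_eq a_chart).
Qed.

Lemma qclass_fiber_closed (R : realType) (n : nat) (M : topologicalType)
    (A : set (chart R n M)) (Q : set (ext R n M)) (e : ext R n M) C :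
  is_chart e.1 -> SQ A Q e ->
  closed [set x | Nset e x /\ qclass A Q (e, x) = C].
Proof.
move=> e_chart SQe; apply: subsingleton_closed; first exact: norm_hausdorff.
move=> x y [Nx Cx] [_ Cy]; apply: (qclass_inj e_chart SQe Nx).
by rewrite Cx Cy.
Qed.

Theorem mainTheorem14 (R : realType) (n : nat) (M : topologicalType)
  (A : set (chart R n M)) :
  hausdorff_space M -> sec_countable M -> maximal_smooth_atlas A ->
  forall Q : set (ext R n M), Q `<=` EX A -> QM_T1 A Q.
Proof.
move=> _ _ [A_chart _ _ _] Q QEX C QMC.
split; first by move=> D [].
split; first by move=> p [].
move=> e SQe; have e_chart : is_chart e.1.
  by apply: A_chart; case: SQe => [[]|/QEX []].
exists (~` [set x | Nset e x /\ qclass A Q (e, x) = C]); split.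
  by rewrite openC; exact: qclass_fiber_closed.
apply/seteqP; split=> x /=.
- by move=> [Nx [_ [_ neqC]]]; split=> // -[_ /neqC].
- move=> [Nx notC]; split=> //; split; first by split.
  by split; [exists (e, x) | move=> eqC; apply: notC].
Qed.
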